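(* Let $\Gamma$ be a compact subset of a Euclidean space $(\mathbb R^n,d)$, let $\delta>0$, and let $m\in\mathbb N$ with $m\le n$, such that for every $\mathcal P\in\mathrm{Gr}(n,m)$ there exists $x\in\Gamma$ with $d(x,\mathcal P)\ge\delta$. Then there are $x_1,\dots,x_{m+1}\in\Gamma$ such that $\mathrm{MinHeight}(x_1,\dots,x_{m+1})\ge\delta$.
   Context: $\mathrm{Gr}(n,m)$ is the set of $m$-dimensional linear subspaces of $\mathbb R^n$. For vectors $a_1,\dots,a_k$ in the Euclidean space $(\mathbb R^n,d)$, $\mathrm{MinHeight}(a_1,\dots,a_k):=\min_{j\in\{1,\dots,k\}}d\big(a_j,\mathrm{span}(a_1,\dots,\widehat{a}_j,\dots,a_k)\big)$, where $\widehat{a}_j$ means $a_j$ is omitted (the span of the empty family is $\{0\}$). *)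

From HB Require Import structures.
From mathcomp Require Import all_boot all_order all_algebra.
From mathcomp Require Import all_classical all_reals all_analysis.
Set Implicit Arguments. Unset Strict Implicit. Unset Printing Implicit Defensive.
Import Order.TTheory GRing.Theory Num.Theory.
Import numFieldNormedType.Exports.
Local Open Scope classical_set_scope.
Local Open Scope ring_scope.

(* Euclidean norm on R^n (NOT the library's max-norm on matrices). *)
Definition enorm {R : realType} {n : nat} (x : 'rV[R]_n) : R :=
  Num.sqrt (\sum_(i < n) (x ord0 i) ^+ 2).

Definition edist_set {R : realType} {n : nat} (x : 'rV[R]_n) (S : set 'rV[R]_n) : R :=
  inf [set enorm (x - y) | y in S].

(* Elements of Gr(n,m) are represented as row spaces of m x n matrices of rank m;
   this is the subspace (as a set) spanned by the rows of P. *)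
Definition rowspace {R : realType} {m n : nat} (P : 'M[R]_(m, n)) : set 'rV[R]_n :=
  [set y | (y <= P)%MS].

(* span(a_1, .., \hat a_j, .., a_k), the span of the empty family being {0}. *)
Definition span_but {R : realType} {n k : nat} (a : 'I_k -> 'rV[R]_n) (j : 'I_k)
  : set 'rV[R]_n :=
  [set y | exists c : 'I_k -> R, y = \sum_(i < k | i != j) c i *: a i].

Definition height {R : realType} {n k : nat} (a : 'I_k -> 'rV[R]_n) (j : 'I_k) : R :=
  edist_set (a j) (span_but a j).

Definition MinHeight {R : realType} {n k : nat} (a : 'I_k.+1 -> 'rV[R]_n) : R :=
  \big[Order.min/height a ord0]_(j < k.+1) height a j.

(* Let G(a) = det(A A^T) be the Gram determinant of a family a with row matrix A.
   Shearing a_j by its orthogonal projection onto the span of the other vectors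
   gives G(a) = G(a without a_j) * height(a, j)^2 for every j.  By compactness some
   family c in Gamma^(m+1) maximizes G, and G(c) > 0 because the hypothesis lets one
   choose m+1 points of Gamma greedily, each at distance >= delta from the span of
   the previous ones.  If some height of c were below delta, replacing c_j by a point
   of Gamma at distance >= delta from the m-plane spanned by the other c_i would
   increase G. *)

From HB Require Import structures.
From mathcomp Require Import all_boot all_order all_algebra.
From mathcomp Require Import all_classical all_reals all_analysis.
From mathcomp Require Import perm zify ring.
Import Order.TTheory GRing.Theory Num.Theory.
Import numFieldNormedType.Exports.
Local Open Scope classical_set_scope.
Local Open Scope ring_scope.
Set Implicit Arguments. Unset Strict Implicit. Unset Printing Implicit Defensive.

Section EuclideanRowSpaces.
Variable R : realType.

Definition dot n (u v : 'rV[R]_n) : R := (u *m v^T) 0 0.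

Lemma dotE n (u v : 'rV[R]_n) : dot u v = \sum_(t < n) u 0 t * v 0 t.
Proof. by rewrite /dot mxE; apply: eq_bigr => t _; rewrite mxE. Qed.

Lemma dot_ge0 n (u : 'rV[R]_n) : 0 <= dot u u.
Proof. by rewrite dotE; apply: sumr_ge0 => t _; rewrite -expr2 sqr_ge0. Qed.

Lemma dot_self_eq0 n (u : 'rV[R]_n) : dot u u = 0 -> u = 0.
Proof.
rewrite dotE => /eqP; rewrite psumr_eq0 => [/allP u0|t _]; last first.
  by rewrite -expr2 sqr_ge0.
apply/rowP => t; have /implyP/(_ isT) := u0 t (mem_index_enum t).
by rewrite mulf_eq0 orbb mxE => /eqP.
Qed.

Lemma pythagoras n (u v : 'rV[R]_n) :
  dot u v = 0 -> dot (u + v) (u + v) = dot u u + dot v v.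
Proof.
rewrite !dotE => uv0.
transitivity (\sum_t (u 0 t * u 0 t + v 0 t * v 0 t) + 2 * \sum_t u 0 t * v 0 t).
  by rewrite mulr_sumr -big_split; apply: eq_bigr => t _ /=; rewrite !mxE; ring.
by rewrite uv0 mulr0 addr0 big_split.
Qed.

Lemma enormE n (u : 'rV[R]_n) : enorm u = Num.sqrt (dot u u).
Proof. by rewrite /enorm dotE; congr Num.sqrt; apply: eq_bigr => t _; rewrite expr2. Qed.

Lemma enorm_sqr n (u : 'rV[R]_n) : enorm u ^+ 2 = dot u u.
Proof. by rewrite enormE sqr_sqrtr // dot_ge0. Qed.

Lemma mulmx_trE m p n (X : 'M[R]_(m, n)) (Y : 'M[R]_(p, n)) i l :
  (X *m Y^T) i l = dot (row i X) (row l Y).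
Proof. by rewrite dotE mxE; apply: eq_bigr => t _; rewrite !mxE. Qed.

Lemma mxrank_gram m n (B : 'M[R]_(m, n)) : \rank (B *m B^T) = \rank B.
Proof.
(* [v *m B *m B^T = 0] forces [|v *m B|^2 = v *m B *m B^T *m v^T = 0]. *)
have kerBBt : (kermx (B *m B^T) <= kermx B)%MS.
  rewrite sub_kermx; apply/eqP/row_matrixP => i; rewrite row_mul row0.
  apply: dot_self_eq0; rewrite /dot trmx_mul !mulmxA -[_ *m B *m B^T]mulmxA -row_mul.
  by rewrite mulmx_ker row0 !mul0mx mxE.
have kerB : (kermx B <= kermx (B *m B^T))%MS.
  by rewrite sub_kermx mulmxA mulmx_ker mul0mx.
have : \rank (kermx (B *m B^T)) = \rank (kermx B) by apply/eqP; rewrite eqn_leq !mxrankS.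
by rewrite !mxrank_ker; have := rank_leq_row B; have := rank_leq_row (B *m B^T); lia.
Qed.

Lemma extend_to_rank p m n (B : 'M[R]_(p, n)) : (\rank B <= m)%N -> (m <= n)%N ->
  exists P : 'M[R]_(m, n), \rank P = m /\ (B <= P)%MS.
Proof.
move=> rB mn; exists (pid_mx m *m row_ebase B); split.
  by rewrite mxrankMfree ?rank_pid_mx // row_free_unit row_ebase_unit.
rewrite -[X in (X <= _)%MS]mulmx_ebase.
have -> : (pid_mx (\rank B) : 'M[R]_(p, n)) =
          (pid_mx (\rank B) : 'M[R]_(p, m)) *m pid_mx m.
  by rewrite mul_pid_mx (minn_idPl rB) (minn_idPr rB).
by rewrite mulmxA -(mulmxA _ (pid_mx m)) submxMl.
Qed.

Lemma edist_set_ge0 n (x : 'rV[R]_n) (S : set 'rV[R]_n) : S !=set0 -> 0 <= edist_set x S.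
Proof.
move=> [y Sy]; apply: lb_le_inf; first by exists (enorm (x - y)), y.
by move=> _ [w _ <-]; exact: sqrtr_ge0.
Qed.

Lemma edist_setS n (x : 'rV[R]_n) (S T : set 'rV[R]_n) :
  S `<=` T -> S !=set0 -> edist_set x T <= edist_set x S.
Proof.
move=> ST [y Sy]; apply: lb_le_inf; first by exists (enorm (x - y)), y.
move=> _ [z Sz <-]; apply: ge_inf; last by exists z => //; exact: ST.
by exists 0 => _ [w _ <-]; exact: sqrtr_ge0.
Qed.

Lemma edist_rowspace_orth k n (x r : 'rV[R]_n) (B : 'M[R]_(k, n)) :
  r *m B^T = 0 -> (x - r <= B)%MS -> edist_set x (rowspace B) = enorm r.
Proof.
move=> rB xrB; have enorm_r : [set enorm (x - y) | y in rowspace B] (enorm r).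
  by exists (x - r) => //; rewrite subKr.
apply/le_anti/andP; split.
  by apply: ge_inf => //; exists 0 => _ [y _ <-]; exact: sqrtr_ge0.
apply: lb_le_inf; first by exists (enorm r).
move=> _ [y /submxP [d ->] <-]; have /submxP [e xr] := xrB.
have -> : x - d *m B = r + (e - d) *m B.
  by rewrite mulmxBl addrA -xr [r + _]addrC subrK.
rewrite !enormE ler_sqrt ?dot_ge0 // pythagoras ?lerDl ?dot_ge0 //.
by rewrite /dot trmx_mul mulmxA rB mul0mx mxE.
Qed.

End EuclideanRowSpaces.

Section GramDeterminant.
Variable R : realType.

Definition gram_det k n (A : 'M[R]_(k, n)) : R := \det (A *m A^T).

Lemma gram_det_eq0 k n (A : 'M[R]_(k, n)) : (gram_det A == 0) = (\rank A != k).
Proof.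
by rewrite /gram_det -[_ == 0]negbK -unitfE -unitmxE -row_free_unit /row_free mxrank_gram.
Qed.

Lemma gram_det_row_perm k n (s : 'S_k) (A : 'M[R]_(k, n)) :
  gram_det (row_perm s A) = gram_det A.
Proof.
rewrite /gram_det row_permE trmx_mul mulmxA -(mulmxA _ A) !det_mulmx det_tr det_perm.
by rewrite mulrC signrMK.
Qed.

Lemma gram_det_shear k n (x : 'rV[R]_n) (B : 'M[R]_(k, n)) (c : 'rV[R]_k) :
  gram_det (col_mx (x - c *m B) B) = gram_det (col_mx x B).
Proof.
have -> : col_mx (x - c *m B) B = block_mx 1%:M (- c) 0 1%:M *m col_mx x B.
  by rewrite mul_block_col !mul1mx mul0mx add0r mulNmx.
rewrite /gram_det trmx_mul mulmxA -(mulmxA _ (col_mx x B)) !det_mulmx det_tr.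
by rewrite det_ublock !det1 !mul1r mulr1.
Qed.

Lemma gram_det_col_mx_orth k n (r : 'rV[R]_n) (B : 'M[R]_(k, n)) :
  r *m B^T = 0 -> gram_det (col_mx r B) = dot r r * gram_det B.
Proof.
move=> rB; have Br : B *m r^T = 0 by rewrite -[B]trmxK -trmx_mul rB trmx0.
by rewrite /gram_det tr_col_mx mul_col_row rB Br det_ublock det_mx11.
Qed.

Lemma gram_det_col_mx k n (x : 'rV[R]_n) (B : 'M[R]_(k, n)) :
  gram_det (col_mx x B) = gram_det B * edist_set x (rowspace B) ^+ 2.
Proof.
have [BBt_unit | BBt_sing] := boolP (B *m B^T \in unitmx).
  (* [c *m B] is the orthogonal projection of [x] onto the row space of [B]. *)
  pose c := x *m B^T *m invmx (B *m B^T); pose r := x - c *m B.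
  have rB : r *m B^T = 0 by rewrite mulmxBl -mulmxA mulmxKV ?subrr.
  have -> : edist_set x (rowspace B) = enorm r.
    by apply: edist_rowspace_orth rB _; rewrite subKr submxMl.
  by rewrite -(gram_det_shear x B c) gram_det_col_mx_orth // enorm_sqr mulrC.
have detB0 : gram_det B == 0 by rewrite /gram_det -[_ == 0]negbK -unitfE -unitmxE.
rewrite (eqP detB0) mul0r; apply/eqP; rewrite gram_det_eq0 -addsmxE.
move: detB0; rewrite gram_det_eq0 => rkB.
have := (mxrank_adds_leqif x B).1; have := rank_leq_row x; have := rank_leq_row B; lia.
Qed.

Lemma gram_det_ge0 k n (A : 'M[R]_(k, n)) : 0 <= gram_det A.
Proof.
elim: k A => [|k IHk] A; first by rewrite /gram_det det_mx00.
by rewrite -[A](@vsubmxK R 1 k n) gram_det_col_mx mulr_ge0 ?sqr_ge0.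
Qed.

Definition fam_mx k n (a : 'I_k -> 'rV[R]_n) : 'M[R]_(k, n) := \matrix_(i < k) a i.

Definition fam_but k n (a : 'I_k.+1 -> 'rV[R]_n) (j : 'I_k.+1) (l : 'I_k) : 'rV[R]_n :=
  a (lift j l).

Lemma span_but_rowspace k n (a : 'I_k.+1 -> 'rV[R]_n) j :
  span_but a j = rowspace (fam_mx (fam_but a j)).
Proof.
have sum_but (F : 'I_k.+1 -> 'rV[R]_n) : \sum_(i | i != j) F i = \sum_l F (lift j l).
  rewrite big_mkcond (bigD1_ord j) //= eqxx add0r.
  by apply: eq_bigr => l _; rewrite eq_sym neq_lift.
rewrite /span_but /rowspace; apply/seteqP; split => y /=.
  move=> [c ->]; rewrite sum_but; apply/submxP; exists (\row_l c (lift j l)).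
  by rewrite mulmx_sum_row; apply: eq_bigr => l _; rewrite rowK mxE.
move=> /submxP [d ->]; exists (fun i => if unlift j i is Some l then d 0 l else 0).
by rewrite sum_but mulmx_sum_row; apply: eq_bigr => l _; rewrite liftK rowK.
Qed.

(* [lift_perm j ord0 1] moves row [j] to the top and keeps the other rows in order. *)
Lemma fam_mx_perm k n (a : 'I_k.+1 -> 'rV[R]_n) j :
  fam_mx a = row_perm (lift_perm j ord0 1) (col_mx (a j) (fam_mx (fam_but a j))).
Proof.
apply/matrixP => i t; rewrite [LHS]mxE [RHS]mxE; case: (unliftP j i) => [l ->|->].
  rewrite lift_perm_lift perm1 (_ : lift ord0 l = rshift 1 l); last exact: val_inj.
  have -> : a (lift j l) 0 t = fam_mx (fam_but a j) l t by rewrite mxE.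
  exact/esym/col_mxEd.
rewrite lift_perm_id (_ : ord0 = lshift k (ord0 : 'I_1)); last exact: val_inj.
exact/esym/col_mxEu.
Qed.

Lemma gram_det_height k n (a : 'I_k.+1 -> 'rV[R]_n) j :
  gram_det (fam_mx a) = gram_det (fam_mx (fam_but a j)) * height a j ^+ 2.
Proof.
by rewrite (fam_mx_perm a j) gram_det_row_perm gram_det_col_mx /height span_but_rowspace.
Qed.

Lemma height_ge0 k n (a : 'I_k.+1 -> 'rV[R]_n) j : 0 <= height a j.
Proof.
rewrite /height span_but_rowspace; apply: edist_set_ge0.
by exists 0; rewrite /rowspace /= sub0mx.
Qed.

End GramDeterminant.

Section Continuity.
Variable R : realType.

Lemma continuous_det (T : topologicalType) p (M : T -> 'M[R]_p) :
  (forall i l, continuous (fun x => M x i l)) -> continuous (fun x => \det (M x)).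
Proof.
move=> cM; have -> : (fun x => \det (M x)) =
    (fun x => \sum_(s : 'S_p) (-1) ^+ s * \prod_i M x i (s i)).
  by apply: funext => x; rewrite /determinant.
apply: continuous_big => [|s _]; first exact: add_continuous.
move=> x; apply: cvgM; first exact: cvg_cst.
by apply: continuous_big => [|i _]; [exact: mul_continuous | exact: cM].
Qed.

Lemma continuous_gram_det k n :
  continuous (fun a : {ptws 'I_k -> 'rV[R]_n} => gram_det (fam_mx a)).
Proof.
have coord_cont i t : continuous (fun a : {ptws 'I_k -> 'rV[R]_n} => a i 0 t).
  move=> a; apply: (@continuous_comp _ _ _ (fun a : {ptws 'I_k -> 'rV[R]_n} => a i)
    (fun v : 'rV[R]_n => v 0 t)); [exact: proj_continuous | exact: coord_continuous].
apply: continuous_det => i l.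
have -> : (fun a : {ptws 'I_k -> 'rV[R]_n} => (fam_mx a *m (fam_mx a)^T) i l) =
          (fun a => \sum_t a i 0 t * a l 0 t).
  by apply: funext => a; rewrite mulmx_trE dotE !rowK.
apply: continuous_big => [|t _]; first exact: add_continuous.
by move=> a; apply: continuousM; [exact: coord_cont | exact: coord_cont].
Qed.

Lemma gram_det_argmax k n (Gamma : set 'rV[R]_n) (b : 'I_k -> 'rV[R]_n) :
  compact Gamma -> (forall i, Gamma (b i)) ->
  exists2 c : 'I_k -> 'rV[R]_n, (forall i, Gamma (c i)) &
    forall a : 'I_k -> 'rV[R]_n, (forall i, Gamma (a i)) ->
      gram_det (fam_mx a) <= gram_det (fam_mx c).
Proof.
move=> cG Gb; pose K := [set a : {ptws 'I_k -> 'rV[R]_n} | forall i, Gamma (a i)].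
have cK : compact K by exact: (@tychonoff _ (fun=> 'rV[R]_n) (fun=> Gamma)).
have cont := continuous_subspaceT (@continuous_gram_det k n) (A := K).
have [|c /set_mem Kc cmax] := compact_EVT_max _ cK cont; first by exists b.
by exists c => // a Ka; apply: cmax; rewrite inE.
Qed.

End Continuity.

Section MaximalGramFamily.
Variables (R : realType) (n m : nat) (Gamma : set 'rV[R]_n) (delta : R).
Hypothesis far_from_planes : forall P : 'M[R]_(m, n), \rank P = m ->
  exists x, Gamma x /\ delta <= edist_set x (rowspace P).

Lemma exists_gram_det_gt0 k : 0 < delta -> (m <= n)%N -> (k <= m.+1)%N ->
  exists2 B : 'M[R]_(k, n), (forall i, Gamma (row i B)) & 0 < gram_det B.
Proof.
move=> delta_gt0 mn; elim: k => [|k IHk] km.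
  by exists 0 => [[]//|]; rewrite /gram_det det_mx00.
have [B GB B_gt0] := IHk (ltnW km).
have [P [rkP BP]] := extend_to_rank (leq_trans (rank_leq_row B) km) mn.
have [x [Gx dx]] := far_from_planes rkP.
exists (col_mx x B).
  move=> i.
  have -> : row i (col_mx x B) = if @fintype.split 1 k i is inr l then row l B else x.
    by apply/rowP => t; rewrite !mxE; case: fintype.split => [i0|l]; rewrite ?mxE ?ord1.
  by case: fintype.split.
rewrite gram_det_col_mx mulr_gt0 // exprn_gt0 // (lt_le_trans delta_gt0) //.
apply: (le_trans dx); apply: edist_setS; last by exists 0; rewrite /rowspace /= sub0mx.
by move=> y; rewrite /rowspace /= => /submx_trans; apply.
Qed.

Lemma height_ge_of_gram_det_max (c : 'I_m.+1 -> 'rV[R]_n) j :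
  (forall i, Gamma (c i)) -> 0 < gram_det (fam_mx c) ->
  (forall a : 'I_m.+1 -> 'rV[R]_n, (forall i, Gamma (a i)) ->
    gram_det (fam_mx a) <= gram_det (fam_mx c)) ->
  delta <= height c j.
Proof.
move=> Gc c_gt0 cmax; set B := fam_mx (fam_but c j).
have B_gt0 : 0 < gram_det B.
  rewrite lt_def gram_det_ge0 andbT; apply: contraTneq c_gt0 => B0.
  by rewrite (gram_det_height c j) -/B B0 mul0r ltxx.
have rkB : \rank B = m by apply/eqP; rewrite -[_ == _]negbK -gram_det_eq0 gt_eqF.
have [x [Gx dx]] := far_from_planes rkB.
pose c' i := if i == j then x else c i.
have c'_but : fam_but c' j = fam_but c j.
  by apply: funext => l; rewrite /fam_but /c' eq_sym (negbTE (neq_lift j l)).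
have c'_height : delta <= height c' j by rewrite /height span_but_rowspace c'_but /c' eqxx.
have : gram_det (fam_mx c') <= gram_det (fam_mx c).
  by apply: cmax => i; rewrite /c'; case: eqP.
rewrite (gram_det_height c' j) (gram_det_height c j) c'_but -/B ler_pM2l //.
by rewrite ler_sqr ?nnegrE ?height_ge0 //; exact: le_trans.
Qed.

End MaximalGramFamily.

Unset Implicit Arguments.
Set Strict Implicit.
Theorem mainTheorem6 (R : realType) (n m : nat) (Gamma : set 'rV[R]_n) (delta : R) :
  compact Gamma -> 0 < delta -> (m <= n)%N ->
  (forall P : 'M[R]_(m, n), \rank P = m ->
     exists x, Gamma x /\ delta <= edist_set x (rowspace P)) ->
  exists a : 'I_m.+1 -> 'rV[R]_n,
    (forall i, Gamma (a i)) /\ delta <= MinHeight a.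
Proof.
move=> cG delta_gt0 mn far.
have [B GB B_gt0] := exists_gram_det_gt0 far delta_gt0 mn (leqnn m.+1).
have [c Gc cmax] := gram_det_argmax cG GB.
have c_gt0 : 0 < gram_det (fam_mx c).
  apply: lt_le_trans (cmax _ GB); suff -> : fam_mx (fun i => row i B) = B by [].
  by apply/row_matrixP => i; rewrite rowK.
have delta_le_height j : delta <= height c j by exact: (height_ge_of_gram_det_max far).
exists c; split => //; rewrite /MinHeight.
by apply: (big_ind (fun y => delta <= y)) => // y z; rewrite le_min => -> ->.
Qed.
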